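(* Let $q \ge 2$ and $n \ge 1$ be integers and let $\Sigma = \{0,1,\dots,q-1\}$. The number of words of length $2^n-1$ over $\Sigma$ that are $Z_n$ instances is exactly $q^n$.
   Context: Zimin words are defined recursively over an alphabet of variables $x_1, x_2, \dots$ by $Z_1 = x_1$ and $Z_{k+1} = Z_k\, x_{k+1}\, Z_k$; thus $Z_k$ has length $2^k-1$ and uses the $k$ distinct letters $x_1,\dots,x_k$ (e.g. $Z_2 = x_1x_2x_1$, $Z_3 = x_1x_2x_1x_3x_1x_2x_1$). A word $W$ over $\Sigma$ is an instance of a word $V$ (a ''$V$ instance'') if there is a non-erasing monoid homomorphism $\phi$ from words over the letters of $V$ to $\Sigma^+$ (i.e. every letter is sent to a nonempty word) with $\phi(V) = W$. *)

From mathcomp Require Import all_boot.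
Set Implicit Arguments. Unset Strict Implicit. Unset Printing Implicit Defensive.

(* Variables x_1, x_2, ... are encoded as natural numbers 0, 1, ...
   (x_i is encoded as i-1). *)

Fixpoint zimin (k : nat) : seq nat :=
  match k with
  | 0 => [::]
  | k'.+1 => zimin k' ++ [:: k'] ++ zimin k'
  end.

(* A homomorphism is determined by its values on letters, so we quantify over
   letter assignments phi : nat -> seq T, nonempty on every letter of V. *)
Definition is_instance (T : Type) (V : seq nat) (W : seq T) : Prop :=
  exists phi : nat -> seq T,
    (forall x, x \in V -> phi x <> [::]) /\ flatten (map phi V) = W.

From mathcomp Require Import all_boot.
From mathcomp Require Import zify.

Set Implicit Arguments.
Unset Strict Implicit.
Unset Printing Implicit Defensive.

(* A non-erasing morphism maps every letter of V to a word of length at least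
   one, so an image of V has length at least |V|, with equality only when every
   letter goes to a single letter.  Hence the instances of Z_n of length
   2^n - 1 are exactly the letter-to-letter images of Z_n, i.e. the maps
   {x_1, ..., x_n} -> Sigma; distinct maps give distinct words because every
   x_i occurs in Z_n. *)

Lemma size_zimin n : size (zimin n) = 2 ^ n - 1.
Proof.
elim: n => [|n IH] //=.
rewrite size_cat /= IH expnS; have := expn_gt0 2 n; lia.
Qed.

Lemma mem_zimin n x : (x \in zimin n) = (x < n).
Proof.
elim: n => [|n IH] //=.
by rewrite mem_cat inE IH; case: ltngtP => //=; lia.
Qed.

Section NonErasing.

Variables (T : Type) (phi : nat -> seq T).

Lemma size_flatten_nonerasing (V : seq nat) :
  (forall x, x \in V -> phi x <> [::]) -> size V <= size (flatten (map phi V)).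
Proof.
elim: V => [|a V IH] //= nonerasing; rewrite size_cat.
have : phi a <> [::] by apply: nonerasing; rewrite mem_head.
have : size V <= size (flatten (map phi V)).
  by apply: IH => x Vx; apply: nonerasing; rewrite inE Vx orbT.
by case: (phi a) => //= *; lia.
Qed.

Lemma eq_size_flatten_nonerasing (V : seq nat) :
    (forall x, x \in V -> phi x <> [::]) ->
    size (flatten (map phi V)) = size V ->
  forall x, x \in V -> size (phi x) = 1.
Proof.
elim: V => [|a V IH] //= nonerasing; rewrite size_cat.
have nonerasingV : forall x, x \in V -> phi x <> [::].
  by move=> x Vx; apply: nonerasing; rewrite inE Vx orbT.
have leVs := size_flatten_nonerasing nonerasingV.
have size_a : 0 < size (phi a) by case: (phi a) (nonerasing a (mem_head a V)).
move=> eq_s x; rewrite inE => /orP [/eqP -> | Vx]; first lia.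
by apply: IH => //; lia.
Qed.

End NonErasing.

Lemma instance_same_sizeP (T : Type) (x0 : T) (V : seq nat) (W : seq T) :
  size W = size V -> is_instance V W <-> exists f : nat -> T, W = map f V.
Proof.
move=> sizeWV; split.
- move=> [phi [nonerasing flattenW]]; subst W.
  have letters := eq_size_flatten_nonerasing nonerasing sizeWV.
  exists (fun x => head x0 (phi x)); rewrite -[RHS]flatten_map1; congr flatten.
  by apply/eq_in_map => x /letters; case: (phi x) => [|a []].
- move=> [f ->]; exists (fun x => [:: f x]); split => //.
  by rewrite flatten_map1.
Qed.

Section TupleSubstitution.

Variables (T : Type) (x0 : T) (n : nat) (V : seq nat).

Lemma map_nth_tuple_inj :
  (forall i, i < n -> i \in V) -> injective (fun t : n.-tuple T => map (nth x0 t) V).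
Proof.
move=> letters t t' eq_tt'; apply: eq_from_tnth => i.
have Vi := letters i (ltn_ord i).
have := congr1 (nth x0 ^~ (index (nat_of_ord i) V)) eq_tt'.
by rewrite !(nth_map 0) ?index_mem // nth_index // !(tnth_nth x0).
Qed.

Lemma map_nth_tuple_surj (f : nat -> T) :
  (forall x, x \in V -> x < n) -> exists t : n.-tuple T, map f V = map (nth x0 t) V.
Proof.
move=> letters; exists [tuple f i | i < n]; apply/eq_in_map => x /letters x_lt_n.
by rewrite -[x]/(nat_of_ord (Ordinal x_lt_n)) nth_mktuple.
Qed.

End TupleSubstitution.

Theorem lemma1 (q n : nat) (hq : 2 <= q) (hn : 1 <= n) :
  exists s : seq (seq 'I_q),
    [/\ uniq s,
        (forall w : seq 'I_q,
            w \in s <-> (size w = 2 ^ n - 1 /\ is_instance (zimin n) w))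
      & size s = q ^ n].
Proof.
case: q hq => [|q] // _.
pose x0 : 'I_q.+1 := ord0.
pose subst (t : n.-tuple 'I_q.+1) := map (nth x0 t) (zimin n).
have subst_inj : injective subst.
  by apply: map_nth_tuple_inj => i; rewrite mem_zimin.
exists (map subst (enum {: n.-tuple 'I_q.+1})); split.
- by rewrite map_inj_uniq // enum_uniq.
- move=> w; rewrite -(size_zimin n); split.
  + move=> /mapP [t _ ->]; rewrite size_map; split => //.
    by apply/(instance_same_sizeP x0); rewrite ?size_map //; exists (nth x0 t).
  + move=> [sizew /(instance_same_sizeP x0 sizew) [f ->]].
    have [t eq_ft] : exists t, map f (zimin n) = subst t.
      by apply: map_nth_tuple_surj => x; rewrite mem_zimin.
    by apply/mapP; exists t; rewrite ?mem_enum.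
- by rewrite size_map -cardE card_tuple card_ord.
Qed.
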